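(* Let $L$ be an $R_0$-algebra and $k\in[0,1)$. If $\mu$ is a strong $(\in,\in\vee q_k)$-fuzzy fated filter of $L$, then for every $t\in(\tfrac{1-k}{2},1]$ the set $Q_k(\mu;t)=\{x\in L\mid \mu(x)+t+k>1\}$ is either empty or a fated filter of $L$.
   Context: An $R_0$-algebra is a bounded distributive lattice $(L,\wedge,\vee,0,1)$ with an order-reversing involution $\neg$ and a binary operation $\to$ such that for all $x,y,z\in L$: $x\to y=\neg y\to\neg x$; $1\to x=x$; $(y\to z)\wedge((x\to y)\to(x\to z))=y\to z$; $x\to(y\to z)=y\to(x\to z)$; $x\to(y\vee z)=(x\to y)\vee(x\to z)$; $(x\to y)\vee((x\to y)\to(\neg x\vee y))=1$. A fated filter of $L$ is a nonempty subset $A\subseteq L$ with $1\in A$ such that for all $x,y\in L$ and $a\in A$, $a\to((x\to y)\to x)\in A$ implies $x\in A$. For $x\in L$, $t\in(0,1]$ and a fuzzy subset $\mu:L\to[0,1]$: $x_t\in\mu$ iff $\mu(x)\ge t$; $x_t\,q_k\,\mu$ iff $\mu(x)+t+k>1$; $x_t\in\vee q_k\,\mu$ iff $x_t\in\mu$ or $x_t\,q_k\,\mu$. A strong $(\in,\in\vee q_k)$-fuzzy fated filter of $L$ is a fuzzy subset $\mu$ such that $\mu(1)\ge\mu(x)$ for all $x\in L$, and for all $x,a,y\in L$, $t,s\in(0,1]$: if $(a\to((x\to y)\to x))_t\in\mu$ and $a_s\in\mu$ then $x_{\min\{t,s\}}\in\vee q_k\,\mu$. *)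

From Stdlib Require Import Reals.
Open Scope R_scope.

(* The lattice order is x <= y  iff  meet x y = x. *)
Record R0_algebra := {
  car :> Type;
  meet : car -> car -> car;
  join : car -> car -> car;
  zero : car;
  one : car;
  neg : car -> car;
  imp : car -> car -> car;
  meetC : forall x y, meet x y = meet y x;
  joinC : forall x y, join x y = join y x;
  meetA : forall x y z, meet x (meet y z) = meet (meet x y) z;
  joinA : forall x y z, join x (join y z) = join (join x y) z;
  meet_absorb : forall x y, meet x (join x y) = x;
  join_absorb : forall x y, join x (meet x y) = x;
  meet_joinDr : forall x y z, meet x (join y z) = join (meet x y) (meet x z);
  meet0 : forall x, meet zero x = zero;
  join1 : forall x, join one x = one;
  negK : forall x, neg (neg x) = x;
  neg_rev : forall x y, meet x y = x -> meet (neg y) (neg x) = neg y;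
  R0_contra : forall x y, imp x y = imp (neg y) (neg x);
  R0_one : forall x, imp one x = x;
  R0_3 : forall x y z, meet (imp y z) (imp (imp x y) (imp x z)) = imp y z;
  R0_exch : forall x y z, imp x (imp y z) = imp y (imp x z);
  R0_join : forall x y z, imp x (join y z) = join (imp x y) (imp x z);
  R0_6 : forall x y, join (imp x y) (imp (imp x y) (join (neg x) y)) = one
}.

Arguments one {_}.
Arguments imp {_}.

Definition fated_filter (L : R0_algebra) (A : L -> Prop) : Prop :=
  (exists x, A x) /\ A one /\
  forall x y a : L, A a -> A (imp a (imp (imp x y) x)) -> A x.

Definition fin {L : R0_algebra} (mu : L -> R) (x : L) (t : R) : Prop := mu x >= t.
Definition fq {L : R0_algebra} (k : R) (mu : L -> R) (x : L) (t : R) : Prop :=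
  mu x + t + k > 1.
Definition fin_or_q {L : R0_algebra} (k : R) (mu : L -> R) (x : L) (t : R) : Prop :=
  fin mu x t \/ fq k mu x t.

Definition fuzzy_subset {L : R0_algebra} (mu : L -> R) : Prop :=
  forall x, 0 <= mu x <= 1.

Definition strong_fuzzy_fated_filter (L : R0_algebra) (k : R) (mu : L -> R) : Prop :=
  fuzzy_subset mu /\
  (forall x : L, mu one >= mu x) /\
  (forall (x a y : L) (t s : R), 0 < t <= 1 -> 0 < s <= 1 ->
     fin mu (imp a (imp (imp x y) x)) t -> fin mu a s ->
     fin_or_q k mu x (Rmin t s)).

Definition Qk {L : R0_algebra} (k : R) (mu : L -> R) (t : R) : L -> Prop :=
  fun x => fq k mu x t.

(* Given a -> ((x -> y) -> x) and a in Q_k(mu; t), apply the strong filter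
   condition at the level r = min(mu(a -> ((x -> y) -> x)), mu(a), t).  As
   t > (1 - k)/2 means t > 1 - t - k, we get r > 1 - t - k, so both
   alternatives mu(x) >= r and mu(x) + r + k > 1 give mu(x) + t + k > 1, the
   second because r <= t.  Membership of 1 follows from mu(1) >= mu(x). *)

From Stdlib Require Import Reals Lra Classical.
Open Scope R_scope.

Section QkFatedFilter.

Variables (L : R0_algebra) (k : R) (mu : L -> R).

Lemma Qk_le (t : R) (x y : L) : mu x <= mu y -> Qk k mu t x -> Qk k mu t y.
Proof. unfold Qk, fq; lra. Qed.

Lemma fin_or_q_Qk (t r : R) (x : L) :
  r <= t -> 1 - t - k < r -> fin_or_q k mu x r -> Qk k mu t x.
Proof. unfold fin_or_q, Qk, fin, fq; intros ? ? [Hin | Hq]; lra. Qed.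

Hypothesis mu_filter : strong_fuzzy_fated_filter L k mu.

Lemma Qk_fated_closed (t : R) (x y a : L) : (1 - k) / 2 < t ->
  Qk k mu t a -> Qk k mu t (imp a (imp (imp x y) x)) -> Qk k mu t x.
Proof.
  destruct mu_filter as [mu_range [_ mu_fated]].
  set (w := imp a (imp (imp x y) x)).
  unfold Qk, fq; intros Ht Ha Hw.
  destruct (Rlt_dec (1 - t - k) 0) as [Hneg | Hnneg].
  { pose proof (mu_range x); lra. }
  set (r := Rmin (Rmin (mu w) (mu a)) t).
  assert (r_le : r <= mu w /\ r <= mu a /\ r <= t).
  { unfold r; pose proof (Rmin_l (mu w) (mu a)); pose proof (Rmin_r (mu w) (mu a)).
    pose proof (Rmin_l (Rmin (mu w) (mu a)) t);
    pose proof (Rmin_r (Rmin (mu w) (mu a)) t); lra. }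
  assert (r_gt : 1 - t - k < r).
  { unfold r; repeat apply Rmin_glb_lt; lra. }
  assert (r_range : 0 < r <= 1) by (pose proof (mu_range a); lra).
  pose proof (mu_fated x a y r r r_range r_range) as Hx.
  rewrite Rmin_left in Hx by lra.
  apply (fin_or_q_Qk t r); try lra.
  apply Hx; unfold fin; fold w; lra.
Qed.

Lemma Qk_fated_filter (t : R) : (1 - k) / 2 < t ->
  (exists x, Qk k mu t x) -> fated_filter L (Qk k mu t).
Proof.
  destruct mu_filter as [_ [mu_one _]].
  intros Ht [x0 Hx0]; split; [now exists x0 | split].
  - exact (Qk_le t x0 one (Rge_le _ _ (mu_one x0)) Hx0).
  - intros x y a; exact (Qk_fated_closed t x y a Ht).
Qed.

End QkFatedFilter.

Theorem corollary3p22 (L : R0_algebra) (k : R) (mu : L -> R) :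
  0 <= k < 1 ->
  strong_fuzzy_fated_filter L k mu ->
  forall t : R, (1 - k) / 2 < t <= 1 ->
    (forall x : L, ~ Qk k mu t x) \/ fated_filter L (Qk k mu t).
Proof.
  intros _ mu_filter t [Ht _].
  destruct (classic (exists x, Qk k mu t x)) as [Hne | Hempty].
  - right; exact (Qk_fated_filter L k mu mu_filter t Ht Hne).
  - left; intros x Hx; exact (Hempty (ex_intro _ x Hx)).
Qed.
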